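(* Let $\Gamma\subset\operatorname{SU}(2)$ be the binary tetrahedral, binary octahedral, or binary icosahedral group, let $\mathsf 2=\mathbb C^2|_\Gamma$ be its standard representation and $\mathsf 3=\operatorname{S}^2(\mathbb C^2)|_\Gamma$. For an irreducible complex representation $\mathsf i$ of $\Gamma$ and a representation $\mathsf j$ put $P_{\mathsf i,\mathsf j}(t)=\sum_{n\ge0}\dim\operatorname{Hom}_\Gamma\bigl(\mathsf i,\operatorname{S}^n(\mathsf j)\bigr)t^n$. Then $$P_{\mathsf i,\mathsf 3}(t)=\begin{cases}\dfrac{P_{\mathsf i,\mathsf 2}(t^{1/2})}{1-t^2}&\text{if }\mathsf i\text{ is not spinorial},\\[2mm] 0&\text{if }\mathsf i\text{ is spinorial.}\end{cases}$$
   Context: An irreducible representation $\mathsf i$ of $\Gamma$ is called spinorial if the nontrivial central element $-I\in\Gamma$ acts on it by $-1$. For non-spinorial $\mathsf i$, $P_{\mathsf i,\mathsf 2}(t)$ involves only even powers of $t$, so $P_{\mathsf i,\mathsf 2}(t^{1/2})$ is a power series in $t$. *)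

From HB Require Import structures.
From mathcomp Require Import all_boot all_order all_algebra all_fingroup all_solvable all_field all_character.
From mathcomp Require Import mpoly.
Set Implicit Arguments. Unset Strict Implicit. Unset Printing Implicit Defensive.
Import Order.TTheory GRing.Theory Num.Theory.
Local Open Scope ring_scope.

(* Monomials of total degree exactly k in m variables: basis of S^k(C^m). *)
Definition Mon (m k : nat) := {x : 'X_{1..m < k.+1} | mdeg x == k}.

Definition mon_of (m k : nat) (a : 'I_#|{: Mon m k}|) : 'X_{1..m} :=
  val (val (enum_val a)).

Definition linsubst (m : nat) (A : 'M[algC]_m) : m.-tuple {mpoly algC[m]} :=
  [tuple \sum_(i < m) A i j *: 'X_i | j < m].

(* Matrix of S^k(A) on the monomial basis of degree-k polynomials. *)
Definition symmat (m k : nat) (A : 'M[algC]_m) : 'M[algC]_#|{: Mon m k}| :=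
  \matrix_(a, b) (('X_[mon_of b] \mPo linsubst A) @_ (mon_of a)).

(* dim Hom_G(chi, V) for a representation V of G with character psi,
   via the character inner product '[psi, chi]_G. *)
Definition homdim (gT : finGroupType) (G : {group gT}) (chi : 'CF(G))
  (psi : gT -> algC) : algC :=
  #|G|%:R^-1 * \sum_(g in G) psi g * (chi g)^*.

(* Elements of G mapped to +-I by rho (the preimage of the center of SU(2)). *)
Definition pmI (gT : finGroupType) (G : {group gT})
  (rho : mx_representation algC G 2) : {set gT} :=
  [set g in G | (rho g == 1%:M) || (rho g == - 1%:M)].

Definition into_SU2 (gT : finGroupType) (G : {group gT})
  (rho : mx_representation algC G 2) : Prop :=
  mx_faithful rho /\
  forall g, g \in G -> (map_mx (fun x : algC => x^*) (rho g))^T *m rho g = 1%:M /\ \det (rho g) = 1.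

(* Binary tetrahedral / octahedral / icosahedral: the image in SO(3)=SU(2)/{+-I}
   is the tetrahedral (A4), octahedral (S4), icosahedral (A5) rotation group. *)
Definition binary_polyhedral (gT : finGroupType) (G : {group gT})
  (rho : mx_representation algC G 2) : Prop :=
  into_SU2 rho /\
  [\/ (G / pmI rho)%g \isog ('Alt_('I_4))%g,
      (G / pmI rho)%g \isog ('Sym_('I_4))%g |
      (G / pmI rho)%g \isog ('Alt_('I_5))%g].

Definition spinorial (gT : finGroupType) (G : {group gT})
  (rho : mx_representation algC G 2) (i : Iirr G) : Prop :=
  exists2 z, z \in G & rho z = - 1%:M /\ 'Chi_i z = - 1%:M.

From HB Require Import structures.
From mathcomp Require Import all_boot all_order all_algebra all_fingroup all_solvable all_field all_character.
From mathcomp Require Import mpoly ssrcomplements ring zify.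
Set Implicit Arguments. Unset Strict Implicit. Unset Printing Implicit Defensive.
Import Order.TTheory GRing.Theory Num.Theory.
Local Open Scope ring_scope.

(* Every g in Gamma has finite order and determinant 1, so rho g is diagonalizable
   with eigenvalues x, y where x y = 1.  Then S^n(rho g) has trace h_n(x, y), the
   complete homogeneous polynomial, and S^2(rho g) has eigenvalues x^2, y^2, 1, so
   S^n(S^2(rho g)) has trace sum_(k <= n) h_k(x^2, y^2).  Sorting the monomials of
   h_(2k+2)(x, y) by the parity of the exponent of x gives
   h_(2k+2)(x, y) = h_(k+1)(x^2, y^2) + h_k(x^2, y^2), whence
   sum_(k <= n) h_k(x^2, y^2) = sum_(j <= n/2) h_(2(n-2j))(x, y); averaging against
   the character of i turns this trace identity into b_n = sum_j a_(2(n-2j)).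
   The parity statements come from -I: since |Gamma| is even, Cauchy gives an
   element of order 2, which in SU(2) can only be -I.  It is central, acts by
   (-1)^n on S^n(C^2), trivially on S^n(S^2 C^2), and by a sign on the irreducible
   i (Schur); translating the averaging sum by -I then makes it vanish whenever
   the two signs differ. *)

Lemma big_ord2 (R : Type) (idx : R) (op : Monoid.law idx) (F : 'I_2 -> R) :
  \big[op/idx]_(i < 2) F i = op (F ord0) (F ord_max).
Proof. by rewrite big_ord_recl big_ord1; congr (op (F _) (F _)); apply: val_inj. Qed.

Lemma comp_mpolyA (R : comRingType) n k l (p : {mpoly R[n]})
    (lq : n.-tuple {mpoly R[k]}) (lr : k.-tuple {mpoly R[l]}) :
  p \mPo lq \mPo lr = p \mPo [tuple tnth lq i \mPo lr | i < n].
Proof.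
rewrite (mpolyE p) (raddf_sum (comp_mpoly lq)) !(raddf_sum (comp_mpoly _)) /=.
apply: eq_bigr => m _; rewrite !comp_mpolyZ !comp_mpolyX rmorph_prod; congr (_ *: _).
by apply: eq_bigr => i _; rewrite rmorphXn tnth_mktuple.
Qed.

Lemma dhomog_mpolywE (R : ringType) n d (p : {mpoly R[n]}) : p \is d.-homog ->
  p = \sum_(m : 'X_{1..n < d.+1} | mdeg m == d) p@_m *: 'X_[m].
Proof.
move=> homp; rewrite -{1}(pihomog_dE homp) (pihomogwE _ _ (k := d.+1)) //.
by rewrite mmeasureE; apply/bigmax_leqP_seq => m /(dhomog_mf homp) ->.
Qed.

Lemma big_mdeg_seq (V : nmodType) m k (s : seq 'X_{1..m}) (F : 'X_{1..m} -> V) :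
  uniq s -> (forall y, (mdeg y == k) = (y \in s)) ->
  \sum_(y : 'X_{1..m < k.+1} | mdeg y == k) F y = \sum_(y <- s) F y.
Proof.
move=> uniq_s mem_s; rewrite (big_mksub ('X_{1..m < k.+1}) uniq_s) => [|y].
  by apply: eq_bigl => y; rewrite mem_s.
by rewrite -mem_s => /eqP ->.
Qed.

Section MonomialBasis.
Variables m k : nat.

Lemma big_Mon (V : nmodType) (F : 'X_{1..m} -> V) :
  \sum_(a < #|{: Mon m k}|) F (mon_of a) =
  \sum_(y : 'X_{1..m < k.+1} | mdeg y == k) F y.
Proof.
rewrite /mon_of -(big_enum_val (fun x : Mon m k => F (val (val x)))) /=.
rewrite (reindex_omap (val : Mon m k -> _) insub) => [|y /= Py]; last by rewrite insubT.
by apply: eq_bigl => -[y Py] /=; rewrite insubT ?Py /= eqxx.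
Qed.

Lemma mdeg_mon_of (a : 'I_#|{: Mon m k}|) : mdeg (mon_of a) = k.
Proof. exact/eqP/(valP (enum_val a)). Qed.

Lemma mon_of_inj : injective (@mon_of m k).
Proof. by move=> a b /val_inj/val_inj/enum_val_inj. Qed.

Lemma mon_of_surj (u : 'X_{1..m}) :
  mdeg u = k -> exists a : 'I_#|{: Mon m k}|, mon_of a = u.
Proof.
move=> degu; have ltu : (mdeg u < k.+1)%N by rewrite degu.
have Mu : mdeg (BMultinom ltu) == k by apply/eqP.
by exists (enum_rank (exist _ (BMultinom ltu) Mu : Mon m k)); rewrite /mon_of enum_rankK.
Qed.

End MonomialBasis.

Section SymmetricPower.
Variable m : nat.
Implicit Types (A B : 'M[algC]_m) (d : 'rV[algC]_m).

Lemma linsubstE A j : tnth (linsubst A) j = \sum_(i < m) A i j *: 'X_i.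
Proof. by rewrite tnth_mktuple. Qed.

Lemma linsubst_diag d j : tnth (linsubst (diag_mx d)) j = d 0 j *: 'X_j.
Proof.
rewrite linsubstE (bigD1 j) //= big1 ?addr0 => [|i neq_ij]; rewrite mxE ?eqxx //.
by rewrite (negbTE neq_ij) mulr0n scale0r.
Qed.

Lemma linsubst_mul A B :
  linsubst (A *m B) = [tuple tnth (linsubst B) j \mPo linsubst A | j < m].
Proof.
apply: eq_from_tnth => j; rewrite tnth_mktuple !linsubstE raddf_sum /=.
under [RHS]eq_bigr do rewrite comp_mpolyZ comp_mpolyXU -tnth_nth linsubstE scaler_sumr.
rewrite exchange_big /=; apply: eq_bigr => i _.
rewrite mxE scaler_suml; apply: eq_bigr => l _.
by rewrite scalerA mulrC.
Qed.

Lemma linsubstX_dhomog A b : 'X_[b] \mPo linsubst A \is (mdeg b).-homog.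
Proof.
rewrite comp_mpolyX mdegE; elim/big_rec2: _ => [|i q e _ homq]; first exact: dhomog1.
rewrite -[X in (X + e)%N]mul1n; apply: dhomogM => //; apply: dhomogMn.
rewrite linsubstE; apply: rpred_sum => l _; apply: rpredZ.
by rewrite dhomogX; apply/eqP/mdeg1.
Qed.

Lemma symmat_mul k A B : symmat k (A *m B) = symmat k A *m symmat k B.
Proof.
apply/matrixP => a b; rewrite !mxE linsubst_mul -comp_mpolyA.
have homB := linsubstX_dhomog B (mon_of b); rewrite mdeg_mon_of in homB.
rewrite [X in X \mPo _](dhomog_mpolywE homB) (raddf_sum (comp_mpoly _)) raddf_sum /=.
under [RHS]eq_bigr do rewrite !mxE.
rewrite (@big_Mon m k _ (fun y => ('X_[y] \mPo linsubst A)@_(mon_of a) *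
                                  ('X_[mon_of b] \mPo linsubst B)@_y)).
by apply: eq_bigr => y _; rewrite comp_mpolyZ mcoeffZ mulrC.
Qed.

Lemma symmat_diag k d :
  symmat k (diag_mx d) = diag_mx (\row_a \prod_(i < m) d 0 i ^+ mon_of a i).
Proof.
apply/matrixP => a b; rewrite !mxE comp_mpolyX.
under eq_bigr do rewrite linsubst_diag exprZn.
rewrite scaler_prod -mpolyXE_id mcoeffZ mcoeffX (inj_eq (@mon_of_inj m k)) eq_sym.
by case: eqVneq => [->|_]; rewrite ?mulr1 ?mulr0.
Qed.

Lemma mxtrace_symmat_diag k d :
  \tr (symmat k (diag_mx d)) =
  \sum_(y : 'X_{1..m < k.+1} | mdeg y == k) \prod_(i < m) d 0 i ^+ y i.
Proof.
rewrite symmat_diag mxtrace_diag -(@big_Mon m k _ (fun y => \prod_(i < m) d 0 i ^+ y i)).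
by apply: eq_bigr => a _; rewrite mxE.
Qed.

Lemma symmat_scalar k c : symmat k (c%:M : 'M_m) = (c ^+ k)%:M.
Proof.
rewrite -diag_const_mx symmat_diag -diag_const_mx; congr diag_mx.
apply/rowP => a; rewrite !mxE; under eq_bigr do rewrite mxE.
by rewrite prodrXr -mdegE mdeg_mon_of.
Qed.

Lemma symmat_opp k A : symmat k (- A) = (-1) ^+ k *: symmat k A.
Proof.
by rewrite -[- A]scaleN1r -[-1 *: A]mul_scalar_mx symmat_mul symmat_scalar mul_scalar_mx.
Qed.

Lemma mxtrace_symmat_conj k (P Q : 'M[algC]_m) A : P *m Q = 1%:M ->
  \tr (symmat k (Q *m A *m P)) = \tr (symmat k A).
Proof.
move=> PQ1; rewrite !symmat_mul mxtrace_mulC !mulmxA -symmat_mul PQ1.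
by rewrite symmat_scalar expr1n mul1mx.
Qed.

End SymmetricPower.

Definition mnm2 (p q : nat) : 'X_{1..2} := [multinom if i == ord0 then p else q | i < 2].

Lemma mdeg2 (y : 'X_{1..2}) : mdeg y = (y ord0 + y ord_max)%N.
Proof. by rewrite mdegE big_ord2. Qed.

Lemma mnm2E (y : 'X_{1..2}) : y = mnm2 (y ord0) (y ord_max).
Proof. by apply/mnmP => -[[|[|//]] lti]; rewrite mnmE /=; congr (y _); apply: val_inj. Qed.

Lemma eq_mnm2 p q p' q' : (mnm2 p q == mnm2 p' q') = (p == p') && (q == q').
Proof.
apply/eqP/andP => [eq_pq | [/eqP-> /eqP->] //].
move: (congr1 (fun y : 'X_{1..2} => y ord0) eq_pq).
by move: (congr1 (fun y : 'X_{1..2} => y ord_max) eq_pq); rewrite !mnmE /= => -> ->.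
Qed.

Lemma big_mdeg2 (V : nmodType) k (F : 'X_{1..2} -> V) :
  \sum_(y : 'X_{1..2 < k.+1} | mdeg y == k) F y = \sum_(p < k.+1) F (mnm2 p (k - p)).
Proof.
rewrite (@big_mdeg_seq _ _ k [seq mnm2 p (k - p) | p <- iota 0 k.+1]).
- by rewrite big_map -val_enum_ord big_map big_enum.
- rewrite map_inj_in_uniq ?iota_uniq // => p p' _ _ /eqP.
  by rewrite eq_mnm2 => /andP[/eqP].
move=> y; rewrite mdeg2; apply/eqP/mapP => [<-|[p]].
  exists (y ord0); first by rewrite mem_iota add0n ltnS leq_addr.
  by rewrite addKn -mnm2E.
by rewrite mem_iota add0n ltnS => lepk ->; rewrite !mnmE /= subnKC.
Qed.

Lemma Mon22_enum : exists i0 i1 i2 : 'I_#|{: Mon 2 2}|,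
  [/\ [/\ mon_of i0 = mnm2 2 0, mon_of i1 = mnm2 0 2 & mon_of i2 = mnm2 1 1],
      [/\ i0 != i1, i0 != i2 & i1 != i2] &
      forall a, [|| a == i0, a == i1 | a == i2]].
Proof.
have mdeg_mnm2 p q : mdeg (mnm2 p q) = (p + q)%N by rewrite mdeg2 !mnmE.
have [i0 mon_i0] := @mon_of_surj 2 2 (mnm2 2 0) (mdeg_mnm2 _ _).
have [i1 mon_i1] := @mon_of_surj 2 2 (mnm2 0 2) (mdeg_mnm2 _ _).
have [i2 mon_i2] := @mon_of_surj 2 2 (mnm2 1 1) (mdeg_mnm2 _ _).
exists i0, i1, i2; split=> [//||a]; rewrite -!(inj_eq (@mon_of_inj 2 2)) mon_i0 mon_i1 mon_i2.
  by rewrite !eq_mnm2.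
rewrite (mnm2E (mon_of a)) !eq_mnm2; have := mdeg_mon_of a; rewrite mdeg2.
by move: (mon_of a ord0) (mon_of a ord_max) => [|[|[|?]]] [|[|[|?]]] //=.
Qed.

(* S^2 of a diagonal 2 x 2 matrix is diagonal on the monomial basis, indexed by
   'I_#|{: Mon 2 2}|: a three-element type that is not syntactically 'I_3. *)
Section ThreeIndices.
Variables (M : nat) (i0 i1 i2 : 'I_M).
Hypotheses (neq01 : i0 != i1) (neq02 : i0 != i2) (neq12 : i1 != i2).
Hypothesis cover3 : forall i, [|| i == i0, i == i1 | i == i2].

Lemma big_cover3 (R : Type) (idx : R) (op : Monoid.com_law idx) (F : 'I_M -> R) :
  \big[op/idx]_i F i = op (op (F i0) (F i1)) (F i2).
Proof.
rewrite (bigD1 i0) // (bigD1 i1) 1?eq_sym // (big_pred1 i2) ?Monoid.mulmA // => i /=.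
have := cover3 i; have [->|_] /= := eqVneq i i0; first by rewrite (negbTE neq02).
by have [->|_] //= := eqVneq i i1; rewrite (negbTE neq12).
Qed.

Definition mnm3 (p q r : nat) : 'X_{1..M} :=
  [multinom if i == i0 then p else if i == i1 then q else r | i < M].

Lemma mnm3E p q r : [/\ mnm3 p q r i0 = p, mnm3 p q r i1 = q & mnm3 p q r i2 = r].
Proof.
rewrite !mnmE eqxx (eq_sym i1) (negbTE neq01) eqxx.
by rewrite (eq_sym i2) (negbTE neq02) (eq_sym i2) (negbTE neq12).
Qed.

Lemma mdeg3 (y : 'X_{1..M}) : mdeg y = (y i0 + y i1 + y i2)%N.
Proof. by rewrite mdegE big_cover3. Qed.

Lemma big_mdeg3 (V : nmodType) n (F : 'X_{1..M} -> V) :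
  \sum_(y : 'X_{1..M < n.+1} | mdeg y == n) F y =
  \sum_(k < n.+1) \sum_(p < k.+1) F (mnm3 p (k - p) (n - k)).
Proof.
rewrite (@big_mdeg_seq _ _ n
  [seq mnm3 p (k - p) (n - k) | k <- iota 0 n.+1, p <- iota 0 k.+1]).
- rewrite big_allpairs_dep -val_enum_ord big_map big_enum; apply: eq_bigr => k _.
  by rewrite -val_enum_ord big_map big_enum.
- apply: allpairs_uniq_dep => [|k _|[k p] [k' p']]; rewrite ?iota_uniq //.
  move=> /allpairsPdep[x [_ [+ _ [-> _]]]] /allpairsPdep[x' [_ [+ _ [-> _]]]] /=.
  rewrite !mem_iota !add0n !ltnS => lexn lex'n eq_mnm.
  have := congr1 (fun y : 'X_{1..M} => y i2) eq_mnm.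
  have := congr1 (fun y : 'X_{1..M} => y i0) eq_mnm.
  have [-> _ ->] := mnm3E p (x - p) (n - x).
  have [-> _ ->] := mnm3E p' (x' - p') (n - x').
  by move=> -> eq_nx; have -> : x = x' by lia.
move=> y; rewrite mdeg3; apply/eqP/allpairsPdep => [<-|[k [p [+ + ->]]]].
  exists (y i0 + y i1)%N, (y i0); rewrite !mem_iota !add0n !ltnS !leq_addr.
  split=> //; apply/mnmP => i; rewrite mnmE addKn [in RHS]addnC addnK.
  by have := cover3 i; do 2?[case: eqVneq => [->|_] //=] => /eqP ->.
rewrite !mem_iota !add0n !ltnS => lekn lepk.
by have [-> -> ->] := mnm3E p (k - p) (n - k); rewrite subnKC // subnKC.
Qed.

End ThreeIndices.

Section CompleteHomogeneous2.
Variable R : comRingType.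
Implicit Types x y : R.

Definition hcomplete x y k := \sum_(p < k.+1) x ^+ p * y ^+ (k - p).

Lemma hcomplete0 x y : hcomplete x y 0 = 1.
Proof. by rewrite /hcomplete big_ord1 mulr1. Qed.

Lemma hcompleteS x y k : hcomplete x y k.+1 = y * hcomplete x y k + x ^+ k.+1.
Proof.
rewrite /hcomplete big_ord_recr subnn mulr1 mulr_sumr; congr (_ + _).
by apply: eq_bigr => -[p /= ltpk] _; rewrite subSn // exprS mulrCA.
Qed.

Lemma hcomplete_even x y k :
  hcomplete x y (2 * k).+2 =
  hcomplete (x ^+ 2) (y ^+ 2) k.+1 + x * y * hcomplete (x ^+ 2) (y ^+ 2) k.
Proof.
elim: k => [|k IH]; first by rewrite !hcompleteS !hcomplete0; ring.
have -> : (2 * k.+1).+2 = (2 * k).+4 by lia.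
rewrite (hcompleteS x y (2 * k).+3) (hcompleteS x y (2 * k).+2) IH.
rewrite (hcompleteS _ _ k.+1) (hcompleteS _ _ k).
have -> : x ^+ (2 * k).+4 = x ^+ 2 * (x ^+ 2) ^+ k.+1.
  by rewrite -exprM -exprD; congr (_ ^+ _); lia.
have -> : x ^+ (2 * k).+3 = x * (x ^+ 2) ^+ k.+1.
  by rewrite -exprM -exprS; congr (_ ^+ _); lia.
rewrite [(x ^+ 2) ^+ k.+2]exprS; ring.
Qed.

Lemma sum_hcomplete_sqr x y n : x * y = 1 ->
  \sum_(k < n.+1) hcomplete (x ^+ 2) (y ^+ 2) k =
  \sum_(j < n./2.+1) hcomplete x y (2 * (n - 2 * j)).
Proof.
move=> xy1; elim/ltn_ind: n => -[|[|n]] IH.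
- by rewrite !big_ord1 !hcomplete0.
- by rewrite /= big_ord_recr !big_ord1 /= (hcomplete_even x y 0) !hcomplete0 mulr1 xy1 addrC.
rewrite 2!big_ord_recr /= IH // -addrA [RHS]big_ord_recl addrC; congr (_ + _).
  have -> : (2 * (n.+2 - 2 * 0))%N = (2 * n.+1).+2 by lia.
  by rewrite hcomplete_even xy1 mul1r addrC.
by apply: eq_bigr => j _; rewrite lift0; congr hcomplete; lia.
Qed.

End CompleteHomogeneous2.

Section TwoByTwo.
Implicit Types d : 'rV[algC]_2.

Lemma mxtrace_symmat_diag2 d k :
  \tr (symmat k (diag_mx d)) = hcomplete (d 0 ord0) (d 0 ord_max) k.
Proof.
rewrite mxtrace_symmat_diag (big_mdeg2 k (fun y : 'X_{1..2} => \prod_(i < 2) d 0 i ^+ y i)).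
by apply: eq_bigr => p _; rewrite big_ord2 !mnmE.
Qed.

Lemma mxtrace_symmat_symmat2_diag d n :
  \tr (symmat n (symmat 2 (diag_mx d))) =
  \sum_(k < n.+1) hcomplete (d 0 ord0 ^+ 2) (d 0 ord_max ^+ 2) k *
                  (d 0 ord0 * d 0 ord_max) ^+ (n - k).
Proof.
rewrite symmat_diag mxtrace_symmat_diag; set e := \row_a _.
have [i0 [i1 [i2 [[mon_i0 mon_i1 mon_i2] [neq01 neq02 neq12] cover]]]] := Mon22_enum.
have e_mnm2 b p q : mon_of b = mnm2 p q -> e 0 b = d 0 ord0 ^+ p * d 0 ord_max ^+ q.
  by move=> mon_b; rewrite mxE big_ord2 mon_b !mnmE.
rewrite (big_mdeg3 neq01 neq02 neq12 cover n
  (fun y : 'X_{1..#|{: Mon 2 2}|} => \prod_(l < #|{: Mon 2 2}|) e 0 l ^+ y l)).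
apply: eq_bigr => k _; rewrite /hcomplete mulr_suml; apply: eq_bigr => p _.
rewrite (big_cover3 neq01 neq02 neq12 cover).
have [-> -> ->] := mnm3E neq01 neq02 neq12 p (k - p) (n - k).
rewrite (e_mnm2 _ _ _ mon_i0) (e_mnm2 _ _ _ mon_i1) (e_mnm2 _ _ _ mon_i2).
by rewrite !expr0 mulr1 mul1r !expr1 -!exprM.
Qed.

End TwoByTwo.

Lemma det_conjmx (R : comUnitRingType) n (P A : 'M[R]_n) :
  P \in unitmx -> \det (invmx P *m A *m P) = \det A.
Proof. by move=> unitP; rewrite !det_mulmx det_inv mulrC mulrA mulrV ?mul1r. Qed.

(* The minimal polynomial divides 'X^K - 1, which has K distinct roots. *)
Lemma mx_finite_order_diag n (M : 'M[algC]_n.+1) K : (0 < K)%N -> M ^+ K = 1 ->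
  exists2 P, P \in unitmx & exists d, M = invmx P *m diag_mx d *m P.
Proof.
move=> K_gt0 MK1; have [z prim_z] := C_prim_root_exists K_gt0.
have : diagonalizable M.
  apply/diagonalizableP; exists [seq z ^+ i | i <- index_iota 0 K].
    rewrite map_inj_in_uniq ?iota_uniq // => i j; rewrite !mem_index_iota.
    move=> ltiK ltjK /eqP; rewrite (eq_prim_root_expr prim_z).
    by rewrite !modn_small // => /eqP.
  rewrite big_map (factor_Xn_sub_1 prim_z); apply: mxminpoly_min.
  by rewrite rmorphB rmorphXn rmorph1 /= horner_mx_X MK1 subrr.
case=> P unitP /similar_diagPex[d /(similarRL unitP) defM].
exists P => //; exists d.
by rewrite defM !mulmxA mulVmx // mul1mx -mulmxA mulVmx // mulmx1.
Qed.

Lemma mxtrace_symmat_symmat2 (M : 'M[algC]_2) K n :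
  (0 < K)%N -> M ^+ K = 1 -> \det M = 1 ->
  \tr (symmat n (symmat 2 M)) = \sum_(j < n./2.+1) \tr (symmat (2 * (n - 2 * j)) M).
Proof.
move=> K_gt0 MK1 detM1; have [P unitP [d defM]] := mx_finite_order_diag K_gt0 MK1.
have PV1 : P *m invmx P = 1%:M by exact: mulmxV.
have xy1 : d 0 ord0 * d 0 ord_max = 1.
  by rewrite -detM1 defM det_conjmx // det_diag big_ord2.
rewrite defM (symmat_mul 2 (invmx P *m diag_mx d)) (symmat_mul 2 (invmx P)).
rewrite mxtrace_symmat_conj; last by rewrite -symmat_mul PV1 symmat_scalar expr1n.
rewrite mxtrace_symmat_symmat2_diag xy1; under eq_bigr do rewrite expr1n mulr1.
rewrite sum_hcomplete_sqr //; apply: eq_bigr => j _.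
by rewrite (mxtrace_symmat_conj _ _ PV1) mxtrace_symmat_diag2.
Qed.

Lemma mx2_sqr_eq1 (M : 'M[algC]_2) : M ^+ 2 = 1 -> \det M = 1 -> M = 1%:M \/ M = - 1%:M.
Proof.
move=> M2 detM1; have [P unitP [d defM]] := mx_finite_order_diag (isT : (0 < 2)%N) M2.
have d2 : diag_mx d *m diag_mx d = 1%:M.
  have -> : diag_mx d = P *m M *m invmx P.
    by rewrite defM !mulmxA mulmxV // mul1mx -mulmxA mulmxV // mulmx1.
  have MM1 : M *m M = 1%:M := M2.
  by rewrite !mulmxA mulmxKV // -(mulmxA P) MM1 mulmx1 mulmxV.
have dd i : d 0 i * d 0 i = 1.
  by have := congr1 (fun A : 'M_2 => A i i) d2; rewrite mulmx_diag !mxE eqxx.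
have xy1 : d 0 ord0 * d 0 ord_max = 1.
  by rewrite -detM1 defM det_conjmx // det_diag big_ord2.
have yx : d 0 ord_max = d 0 ord0 by rewrite -[LHS]mul1r -(dd ord0) -mulrA xy1 mulr1.
have scalarD : diag_mx d = (d 0 ord0)%:M.
  rewrite -diag_const_mx; congr diag_mx; apply/rowP => j; rewrite mxE.
  by case: j => -[|[|//]] ltj; [|rewrite -yx]; congr (d 0 _); apply: val_inj.
have -> : M = (d 0 ord0)%:M.
  by rewrite defM scalarD mul_mx_scalar -scalemxAl mulVmx // scalemx1.
have /eqP := dd ord0; rewrite -expr2 sqrf_eq1 => /orP[] /eqP ->; first by left.
by right; rewrite raddfN.
Qed.

Lemma scalar_mx_sqr_eq1 (R : idomainType) n (c : R) : (0 < n)%N ->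
  (c%:M : 'M_n) *m c%:M = 1%:M -> c = 1 \/ c = -1.
Proof.
move=> n_gt0; rewrite -scalar_mxM => /matrixP/(_ (Ordinal n_gt0) (Ordinal n_gt0)).
rewrite !mxE eqxx !mulr1n => /eqP; rewrite -expr2 sqrf_eq1.
by case/orP => /eqP ->; [left | right].
Qed.

Lemma sum_group_eq0_translate (R : numDomainType) (gT : finGroupType) (G : {group gT})
    (F : gT -> R) z :
  z \in G -> (forall g, g \in G -> F (z * g)%g = - F g) -> \sum_(g in G) F g = 0.
Proof.
move=> Gz Fz; have : \sum_(g in G) F g = - \sum_(g in G) F g.
  rewrite [LHS](reindex_inj (mulgI z)) -sumrN /=.
  by apply: eq_big => g; rewrite (groupMl _ Gz) // => Gg; rewrite Fz.
by move/eqP; rewrite -addr_eq0 -mulr2n mulrn_eq0 => /eqP.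
Qed.

Section HomDim.
Variables (gT : finGroupType) (G : {group gT}) (chi : 'CF(G)).

Lemma eq_homdim (psi1 psi2 : gT -> algC) :
  {in G, psi1 =1 psi2} -> homdim chi psi1 = homdim chi psi2.
Proof. by move=> eq_psi; congr (_ * _); apply: eq_bigr => g /eq_psi ->. Qed.

Lemma homdim_sum I (r : seq I) (psi : I -> gT -> algC) :
  homdim chi (fun g => \sum_(j <- r) psi j g) = \sum_(j <- r) homdim chi (psi j).
Proof.
rewrite /homdim -mulr_sumr exchange_big /=; congr (_ * _).
by apply: eq_bigr => g _; rewrite mulr_suml.
Qed.

Lemma homdim_eq0_translate (psi : gT -> algC) z (b : bool) :
  z \in G -> (forall g, g \in G -> psi (z * g)%g = (-1) ^+ b * psi g) ->
  (forall g, g \in G -> chi (z * g)%g = - (-1) ^+ b * chi g) -> homdim chi psi = 0.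
Proof.
move=> Gz psiz chiz; rewrite /homdim (sum_group_eq0_translate Gz) ?mulr0 // => g Gg.
rewrite psiz // chiz // rmorphM rmorphN /= rmorph_sign mulNr mulrN mulrACA.
by rewrite -mulrA signrMK.
Qed.

End HomDim.

Lemma repr_mx_order (F : fieldType) (gT : finGroupType) (G : {group gT}) n
    (rG : mx_representation F G n.+1) g :
  g \in G -> rG g ^+ #[g]%g = 1.
Proof. by move=> Gg; rewrite -repr_mxX // expg_order repr_mx1. Qed.

Section FaithfulRepresentation.
Variables (F : fieldType) (gT : finGroupType) (G : {group gT}) (n : nat).
Variable rG : mx_representation F G n.
Hypothesis ffulG : mx_faithful rG.
Variable z : gT.
Hypotheses (Gz : z \in G) (rGz : rG z = - 1%:M).

Lemma faithful_reprN1_commute g : g \in G -> commute z g.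
Proof.
move=> Gg; apply: (mx_faithful_inj ffulG); rewrite ?groupM //.
by rewrite !repr_mxM // rGz mulNmx mulmxN mul1mx mulmx1.
Qed.

Lemma faithful_reprN1_sqr : (z * z = 1)%g.
Proof.
apply: (mx_faithful_inj ffulG); rewrite ?groupM //.
by rewrite repr_mxM // rGz mulNmx mulmxN mul1mx opprK repr_mx1.
Qed.

End FaithfulRepresentation.

Section IrreducibleCentral.
Variables (gT : finGroupType) (G : {group gT}) (i : Iirr G).

Lemma irr_repr_central_sign z :
  z \in G -> (forall g, g \in G -> commute z g) -> (z * z = 1)%g ->
  'Chi_i z = 1%:M \/ 'Chi_i z = - 1%:M.
Proof.
move=> Gz zC zz1; have /is_scalar_mxP[c Chiz] : is_scalar_mx ('Chi_i z).
  apply: (mx_abs_irr_cent_scalar (groupC (socle_irr _))).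
  by apply/centgmxP => g Gg; rewrite -!repr_mxM // zC.
have cc1 : (c%:M : 'M_(irr_degree (socle_of_Iirr i))) *m c%:M = 1%:M.
  by rewrite -Chiz -repr_mxM // zz1 repr_mx1.
rewrite Chiz; case: (scalar_mx_sqr_eq1 (irr_degree_gt0 _) cc1) => ->; first by left.
by right; rewrite raddfN.
Qed.

Lemma cfun_irr_mulg_scalar z g c :
  z \in G -> g \in G -> 'Chi_i z = c%:M -> 'chi_i (z * g)%g = c * 'chi_i g.
Proof.
move=> Gz Gg Chiz; rewrite -irrRepr !cfunE groupM // Gg !mulr1n.
by rewrite repr_mxM // Chiz mul_scalar_mx mxtraceZ.
Qed.

End IrreducibleCentral.

Lemma Alt_order_even (T : finType) : (3 < #|T|)%N -> (2 %| #|('Alt_T)%g|)%N.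
Proof.
move=> T_gt3; rewrite -(dvdn_pmul2l (isT : 0 < 2)%N) card_Alt ?(ltn_trans _ T_gt3) //.
exact: dvdn_fact.
Qed.

Section BinaryPolyhedral.
Variables (gT : finGroupType) (G : {group gT}) (rho : mx_representation algC G 2).
Hypothesis polyG : binary_polyhedral rho.

Lemma binary_polyhedral_order_even : (2 %| #|G|)%N.
Proof.
have [_ isoG] := polyG.
apply: (@dvdn_trans #|(G / pmI rho)%g|); last exact: dvdn_morphim.
by case: isoG => /card_isog ->; rewrite ?card_Sym ?Alt_order_even ?card_ord.
Qed.

Lemma binary_polyhedral_N1 : exists2 z, z \in G & rho z = - 1%:M.
Proof.
have [[ffulG SU2] _] := polyG.
have [x Gx ox] := Cauchy (isT : prime 2) binary_polyhedral_order_even.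
exists x => //; have rx2 := repr_mx_order rho Gx; rewrite ox in rx2.
have [rx1|//] := mx2_sqr_eq1 rx2 (SU2 x Gx).2.
have x1 : x = 1%g by apply: (mx_faithful_inj ffulG); rewrite ?rx1 ?repr_mx1.
by move: ox; rewrite x1 order1.
Qed.

End BinaryPolyhedral.

Unset Implicit Arguments.

Theorem mainTheorem7 (gT : finGroupType) (G : {group gT})
  (rho : mx_representation algC G 2) (i : Iirr G) :
  binary_polyhedral rho ->
  let a := fun n : nat => homdim 'chi_i (fun g => \tr (symmat n (rho g))) in
  let b := fun n : nat => homdim 'chi_i (fun g => \tr (symmat n (symmat 2 (rho g)))) in
  (~ spinorial rho i ->
     (forall n, odd n -> a n = 0) /\
     (forall n, b n = \sum_(j < n./2.+1) a (2 * (n - 2 * j))%N)) /\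
  (spinorial rho i -> forall n, b n = 0).
Proof.
move=> polyG a b; have [[ffulG SU2] _] := polyG.
split=> [nspin | [z Gz [rhoz Chiz]] n].
  have [z Gz rhoz] := binary_polyhedral_N1 polyG.
  have Chiz : 'Chi_i z = 1%:M.
    have [//|ChizN1] := irr_repr_central_sign i Gz
      (faithful_reprN1_commute ffulG Gz rhoz) (faithful_reprN1_sqr ffulG Gz rhoz).
    by case: nspin; exists z.
  split=> [n odd_n | n].
    apply: (homdim_eq0_translate (b := true) Gz) => g Gg.
      by rewrite repr_mxM // rhoz mulNmx mul1mx symmat_opp mxtraceZ -signr_odd odd_n.
    by rewrite (cfun_irr_mulg_scalar Gz Gg Chiz) expr1 opprK.
  rewrite /b /a -homdim_sum; apply: eq_homdim => g Gg.
  exact: mxtrace_symmat_symmat2 n (order_gt0 g) (repr_mx_order rho Gg) (SU2 g Gg).2.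
have ChizN1 : 'Chi_i z = (-1)%:M by rewrite Chiz raddfN.
apply: (homdim_eq0_translate (b := false) Gz) => g Gg.
  by rewrite repr_mxM // rhoz mulNmx mul1mx symmat_opp sqrrN expr1n scale1r mul1r.
by rewrite (cfun_irr_mulg_scalar Gz Gg ChizN1) expr0.
Qed.
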